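(* Let $n\ge1$ and let $\alpha_1,\dots,\alpha_n$ be congruences of a group $(G,\cdot,{}^{-1},1)$. Then $[\alpha_1,\dots,\alpha_n]_{(G,\cdot,{}^{-1},1)}=[\alpha_1,\dots,\alpha_n]_{(G,\cdot)}$, i.e. the commutator computed in the group equals the commutator computed in its semigroup reduct.
   Context: For an algebra $\mathbf A$ and congruences $\alpha_1,\dots,\alpha_n$, $M_{\mathbf A}(\alpha_1,\dots,\alpha_n)$ is the subalgebra of $\mathbf A^{\{0,1\}^n}$ (operations of $\mathbf A$ pointwise) generated by all $g$ such that for some $i$ and $(a,b)\in\alpha_i$, $g(x)=a$ if $x_i=0$ and $g(x)=b$ if $x_i=1$; the commutator $[\alpha_1,\dots,\alpha_n]_{\mathbf A}$ is the smallest congruence $\delta$ of $\mathbf A$ such that for all $f\in M_{\mathbf A}(\alpha_1,\dots,\alpha_n)$: if $(f(x0),f(x1))\in\delta$ for all $x\in\{0,1\}^{n-1}\setminus\{(1,\dots,1)\}$, then $(f(1,\dots,1,0),f(1,\dots,1,1))\in\delta$. *)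

From mathcomp Require Import all_boot.
Set Implicit Arguments. Unset Strict Implicit. Unset Printing Implicit Defensive.

Record algebra (T : Type) := Algebra {
  op_index : Type;
  arity : op_index -> nat;
  interp : forall o : op_index, ('I_(arity o) -> T) -> T }.

Definition congruence (T : Type) (A : algebra T) (R : T -> T -> Prop) : Prop :=
  [/\ (forall x, R x x), (forall x y, R x y -> R y x),
      (forall x y z, R x y -> R y z -> R x z) &
      (forall (o : op_index A) (a b : 'I_(arity o) -> T),
          (forall j, R (a j) (b j)) -> R (interp a) (interp b))].

Inductive group_op := GMul | GInv | GOne.
Definition group_arity (o : group_op) : nat :=
  match o with GMul => 2 | GInv => 1 | GOne => 0 end.
Definition group_interp (T : Type) (mul : T -> T -> T) (inv : T -> T) (one : T)
  (o : group_op) : ('I_(group_arity o) -> T) -> T :=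
  match o return ('I_(group_arity o) -> T) -> T with
  | GMul => fun a => mul (a ord0) (a ord_max)
  | GInv => fun a => inv (a ord0)
  | GOne => fun _ => one
  end.
Definition group_alg (T : Type) (mul : T -> T -> T) (inv : T -> T) (one : T)
  : algebra T := @Algebra T group_op group_arity (group_interp mul inv one).

Definition semigroup_interp (T : Type) (mul : T -> T -> T) (o : unit)
  : ('I_2 -> T) -> T := fun a => mul (a ord0) (a ord_max).
Definition semigroup_alg (T : Type) (mul : T -> T -> T) : algebra T :=
  @Algebra T unit (fun _ => 2) (semigroup_interp mul).

(* M_A(alpha_1,...,alpha_n): the subalgebra of A^({0,1}^n) generated by the
   functions x |-> (if x_i = 0 then a else b) with (a,b) in alpha_i.
   Elements of {0,1}^n are functions 'I_n -> bool (false = 0, true = 1). *)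
Inductive inM (T : Type) (A : algebra T) (n : nat)
    (alphas : 'I_n -> T -> T -> Prop) : ((('I_n -> bool) -> T) -> Prop) :=
| M_gen (f : ('I_n -> bool) -> T) (i : 'I_n) (a b : T) :
    alphas i a b -> (forall x, f x = if x i then b else a) -> inM A alphas f
| M_op (f : ('I_n -> bool) -> T) (o : op_index A)
    (g : 'I_(arity o) -> (('I_n -> bool) -> T)) :
    (forall j, inM A alphas (g j)) ->
    (forall x, f x = interp (fun j => g j x)) -> inM A alphas f.

(* For x in {0,1}^(n-1) and b in {0,1}, ext x b is the tuple "x b" in {0,1}^n
   (b placed in the last coordinate). *)
Definition ext (n : nat) (x : 'I_n.-1 -> bool) (b : bool) : 'I_n -> bool :=
  fun i => match (insub (nat_of_ord i) : option 'I_n.-1) with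
           | Some j => x j
           | None => b
           end.

(* delta satisfies the term condition for M_A(alpha_1,...,alpha_n). *)
Definition comm_closed (T : Type) (A : algebra T) (n : nat)
    (alphas : 'I_n -> T -> T -> Prop) (d : T -> T -> Prop) : Prop :=
  forall f, inM A alphas f ->
    (forall x : 'I_n.-1 -> bool, ~ (forall j, x j = true) ->
        d (f (ext x false)) (f (ext x true))) ->
    d (f (ext (fun _ => true) false)) (f (ext (fun _ => true) true)).

Definition commutator (T : Type) (A : algebra T) (n : nat)
    (alphas : 'I_n -> T -> T -> Prop) (x y : T) : Prop :=
  forall d, congruence A d -> comm_closed A alphas d -> d x y.

(* A congruence of the reduct (G, * ) is automatically compatible with inversion,
   since inv x = inv x * y * inv y ~ inv x * x * inv y = inv y whenever x ~ y; and
   M_(G, * ) = M_(G,*,^-1,1), because inv (f * g) = inv g * inv f reduces inversions to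
   inverted generators (again generators, congruences being inversion-closed), and the
   constant 1 is itself a generator from the pair (1, 1) (this needs n >= 1).  The commutator depends only
   on the congruences and on M, so the two commutators coincide. *)
From mathcomp Require Import all_boot.

Set Implicit Arguments.
Unset Strict Implicit.
Unset Printing Implicit Defensive.

Section CommutatorInvariance.
Variables (T : Type) (n : nat) (alphas : 'I_n -> T -> T -> Prop).

Lemma inM_eq (A : algebra T) (f f' : ('I_n -> bool) -> T) :
  inM A alphas f -> f =1 f' -> inM A alphas f'.
Proof.
case=> [f0 i a b Hab Hf | f0 o g Hg Hf] Hff'.
- by apply: (M_gen _ Hab) => x; rewrite -Hff' Hf.
- by apply: (M_op Hg) => x; rewrite -Hff' Hf.
Qed.

Lemma commutator_eq (A B : algebra T) :
  (forall d, congruence A d <-> congruence B d) ->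
  (forall f, inM A alphas f <-> inM B alphas f) ->
  forall x y, commutator A alphas x y <-> commutator B alphas x y.
Proof.
move=> congAB inMAB x y.
have closedAB d : comm_closed A alphas d <-> comm_closed B alphas d.
  by split=> Hd f /inMAB; apply: Hd.
by split=> Hxy d /congAB Hd /closedAB Hcl; apply: Hxy.
Qed.

End CommutatorInvariance.

Definition pair2 (U : Type) (u v : U) : 'I_2 -> U :=
  fun j => if nat_of_ord j == 0 then u else v.

Section GroupReduct.
Variables (T : Type) (mul : T -> T -> T) (inv : T -> T) (one : T).
Hypotheses (mulA : forall x y z, mul x (mul y z) = mul (mul x y) z)
  (mul1g : forall x, mul one x = x) (mulg1 : forall x, mul x one = x)
  (mulVg : forall x, mul (inv x) x = one) (mulgV : forall x, mul x (inv x) = one).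

Local Notation G := (group_alg mul inv one).
Local Notation S := (semigroup_alg mul).

Lemma invgM x y : inv (mul x y) = mul (inv y) (inv x).
Proof.
have Hinv : mul (mul x y) (mul (inv y) (inv x)) = one.
  by rewrite -mulA (mulA y) mulgV mul1g mulgV.
by rewrite -[LHS]mulg1 -Hinv mulA mulVg mul1g.
Qed.

Lemma semigroup_congruence_mul d : congruence S d ->
  forall a b c e, d a b -> d c e -> d (mul a c) (mul b e).
Proof.
case=> _ _ _ Hcomp a b c e Hab Hce.
by apply: (Hcomp tt (pair2 a c) (pair2 b e)) => j; rewrite /pair2; case: ifP.
Qed.

Lemma semigroup_congruence_inv d : congruence S d ->
  forall a b, d a b -> d (inv a) (inv b).
Proof.
move=> Hd a b Hab; have Hmul := semigroup_congruence_mul Hd.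
have [Hrefl Hsym _ _] := Hd.
suff : d (mul (inv a) (mul b (inv b))) (mul (inv a) (mul a (inv b))).
  by rewrite mulgV mulg1 mulA mulVg mul1g.
by apply: (Hmul) => //; apply: (Hmul) => //; apply: Hsym.
Qed.

Lemma congruence_group_semigroup d : congruence G d <-> congruence S d.
Proof.
split.
- by case=> Hrefl Hsym Htrans Hcomp; split=> // -[]; apply: (Hcomp GMul).
- move=> Hd; have Hmul := semigroup_congruence_mul Hd.
  have Hinv := semigroup_congruence_inv Hd.
  have [Hrefl Hsym Htrans _] := Hd; split=> // -[] a b Hab /=.
  + exact: Hmul.
  + exact: Hinv.
  + exact: Hrefl.
Qed.

Variables (n : nat) (hn : 1 <= n) (alphas : 'I_n -> T -> T -> Prop).
Hypothesis halphas : forall i, congruence G (alphas i).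

Lemma inM_semigroup_group f : inM S alphas f -> inM G alphas f.
Proof.
elim=> [f0 i a b Hab Hf | f0 o g _ IH Hf].
- exact: M_gen Hab Hf.
- exact: (@M_op _ G _ _ _ GMul g IH Hf).
Qed.

Lemma inM_semigroup_inv f : inM S alphas f -> inM S alphas (inv \o f).
Proof.
elim=> [f0 i a b Hab Hf | f0 [] g _ IH Hf].
- have Hinv : alphas i (inv a) (inv b).
    have [_ _ _ Hcomp] := halphas i.
    exact: (Hcomp GInv (fun _ => a) (fun _ => b)).
  by apply: (M_gen _ Hinv) => x /=; rewrite Hf; case: (x i).
- apply: (@M_op _ S _ _ _ tt (pair2 (inv \o g ord_max) (inv \o g ord0))).
    by move=> j; rewrite /pair2; case: ifP.
  by move=> x /=; rewrite Hf /= invgM.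
Qed.

Lemma inM_group_semigroup f : inM G alphas f -> inM S alphas f.
Proof.
elim=> [f0 i a b Hab Hf | f0 [] g _ IH Hf].
- exact: M_gen Hab Hf.
- exact: (@M_op _ S _ _ _ tt g IH Hf).
- by apply: inM_eq (inM_semigroup_inv (IH ord0)) _ => x; rewrite Hf.
- have i0 : 'I_n := Ordinal hn.
  have H11 : alphas i0 one one by case: (halphas i0).
  by apply: (M_gen _ H11) => x; rewrite Hf; case: (x i0).
Qed.

End GroupReduct.

Theorem lemma2p3 (T : Type) (mul : T -> T -> T) (inv : T -> T) (one : T)
  (mulA : forall x y z, mul x (mul y z) = mul (mul x y) z)
  (mul1g : forall x, mul one x = x) (mulg1 : forall x, mul x one = x)
  (mulVg : forall x, mul (inv x) x = one) (mulgV : forall x, mul x (inv x) = one)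
  (n : nat) (hn : 1 <= n) (alphas : 'I_n -> T -> T -> Prop)
  (halphas : forall i, congruence (group_alg mul inv one) (alphas i)) :
  forall x y : T,
    commutator (group_alg mul inv one) alphas x y <->
    commutator (semigroup_alg mul) alphas x y.
Proof.
apply: commutator_eq => [d | f].
- exact: congruence_group_semigroup.
- split; first exact: inM_group_semigroup.
  exact: inM_semigroup_group.
Qed.
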